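(* Consider a symmetric two-player Prisoner's Dilemma with payoffs $(a,a)$ for $(C,C)$, $(b,c)$ for $(C,D)$, $(c,b)$ for $(D,C)$ and $(d,d)$ for $(D,D)$, where $c>a>d>b$, and set $\Delta C=c-a>0$ and $\Delta D=d-b>0$. Let both players' tolerances be drawn from the same distribution on $[0,\infty)$ with continuous cumulative distribution function $F$. Then: (i) $\alpha\in[0,1]$ is a symmetric particularly cooperative equilibrium if and only if $1-\alpha=F(\alpha\,\Delta C+(1-\alpha)\,\Delta D)$, and at least one such $\alpha$ exists; (ii) $\alpha=0$ is a symmetric particularly cooperative equilibrium if and only if $F(\Delta D)=1$; (iii) if $\Delta C>\Delta D$, there is exactly one symmetric particularly cooperative equilibrium.
   Context: If a player believes the other player plays $C$ with probability $\alpha$, the gain from defecting rather than cooperating is $\alpha\,\Delta C+(1-\alpha)\,\Delta D$, so a player with tolerance $t$ finds $C$ to be a $t$-best response (i.e., $u(D)\le u(C)+t$) iff $t\ge \alpha\,\Delta C+(1-\alpha)\,\Delta D$. A symmetric particularly cooperative equilibrium is a number $\alpha\in[0,1]$ such that, when each player believes the other cooperates with probability $\alpha$, every tolerance type for which $C$ is a $t$-best response plays $C$, every other type plays $D$ (the only $t$-best response for it), and the resulting overall probability that a player cooperates equals $\alpha$; that is, $\alpha=\Pr_F\big[T\ge \alpha\,\Delta C+(1-\alpha)\,\Delta D\big]$ where $T$ is a tolerance drawn from $F$. *)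

From Stdlib Require Import Reals Lra.
Open Scope R_scope.

Definition is_tolerance_cdf (F : R -> R) : Prop :=
  (forall x y, x <= y -> F x <= F y) /\
  (forall x, forall eps, 0 < eps -> exists delta, 0 < delta /\
      forall y, x <= y < x + delta -> Rabs (F y - F x) < eps) /\
  (forall x, x < 0 -> F x = 0) /\
  (forall eps, 0 < eps -> exists M, forall x, M <= x -> Rabs (F x - 1) < eps).

Definition left_limit (F : R -> R) (x L : R) : Prop :=
  forall eps, 0 < eps -> exists delta, 0 < delta /\
    forall y, x - delta < y < x -> Rabs (F y - L) < eps.

(* Pr_F[T >= x] = 1 - F(x-), for T distributed with CDF F. *)
Definition prob_ge (F : R -> R) (x p : R) : Prop :=
  exists L, left_limit F x L /\ p = 1 - L.

Definition spce (dC dD : R) (F : R -> R) (alpha : R) : Prop :=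
  0 <= alpha <= 1 /\ prob_ge F (alpha * dC + (1 - alpha) * dD) alpha.

(* A continuous CDF has no atoms, so Pr_F[T >= x] = 1 - F x and the
   equilibrium condition becomes the fixed-point equation 1 - alpha = F (s alpha)
   with s alpha = alpha dC + (1 - alpha) dD.  At alpha = 0 the left side is 1 >= F,
   at alpha = 1 it is 0 <= F, so the intermediate value theorem gives a solution.
   When dC > dD, s is increasing, so F o s is nondecreasing while 1 - alpha is
   strictly decreasing: the two graphs cross at most once. *)
From Stdlib Require Import Reals Lra.
Open Scope R_scope.

Lemma left_limit_unique (F : R -> R) (x L L' : R) :
  left_limit F x L -> left_limit F x L' -> L = L'.
Proof.
  intros HL HL'.
  destruct (Req_dec L L') as [|Hne]; [assumption|exfalso].
  set (e := Rabs (L - L') / 2).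
  assert (He : 0 < e) by (unfold e; pose proof (Rabs_pos_lt (L - L')); lra).
  destruct (HL e He) as [d1 [Hd1 H1]].
  destruct (HL' e He) as [d2 [Hd2 H2]].
  set (y := x - Rmin d1 d2 / 2).
  pose proof (Rmin_l d1 d2); pose proof (Rmin_r d1 d2).
  assert (0 < Rmin d1 d2) by (apply Rmin_pos; assumption).
  assert (A : Rabs (F y - L) < e) by (apply H1; unfold y; lra).
  assert (B : Rabs (F y - L') < e) by (apply H2; unfold y; lra).
  assert (Rabs (L - L') <= Rabs (F y - L) + Rabs (F y - L')).
  { replace (L - L') with (- (F y - L) + (F y - L')) by ring.
    rewrite <- (Rabs_Ropp (F y - L)). apply Rabs_triang. }
  unfold e in *; lra.
Qed.

Lemma left_limit_continuity_pt (F : R -> R) (x : R) :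
  continuity_pt F x -> left_limit F x (F x).
Proof.
  intros HF eps He.
  destruct (HF eps He) as [d [Hd H]].
  exists d; split; [assumption|].
  intros y Hy. apply (H y). simpl; unfold R_dist.
  split; [split; [exact I | lra]|].
  rewrite Rabs_left; lra.
Qed.

Lemma prob_ge_continuity_pt (F : R -> R) (x p : R) :
  continuity_pt F x -> (prob_ge F x p <-> p = 1 - F x).
Proof.
  intros HF; split.
  - intros [L [HL ->]].
    now rewrite (left_limit_unique F x L (F x) HL (left_limit_continuity_pt F x HF)).
  - intros ->. exists (F x). split; [apply left_limit_continuity_pt|]; auto.
Qed.

Lemma tolerance_cdf_bounds (F : R -> R) :
  is_tolerance_cdf F -> forall x, 0 <= F x <= 1.
Proof.
  intros [Hmono [_ [Hneg Hlim]]] x.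
  pose proof (Rle_abs x); pose proof (Rabs_pos x).
  split.
  - rewrite <- (Hneg (x - Rabs x - 1)) by lra. apply Hmono; lra.
  - destruct (Rle_dec (F x) 1) as [|Hgt]; [assumption|exfalso].
    destruct (Hlim (F x - 1)) as [M HM]; [lra|].
    specialize (HM (Rmax M x) (Rmax_l M x)).
    assert (F x <= F (Rmax M x)) by (apply Hmono, Rmax_r).
    rewrite Rabs_right in HM; lra.
Qed.

Section Equilibria.

Variables (dC dD : R) (F : R -> R).
Hypothesis F_cont : continuity F.

Let threshold (alpha : R) : R := alpha * dC + (1 - alpha) * dD.

Lemma spce_fixpointE (alpha : R) :
  spce dC dD F alpha <-> 0 <= alpha <= 1 /\ 1 - alpha = F (threshold alpha).
Proof.
  unfold spce. rewrite prob_ge_continuity_pt by apply F_cont.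
  unfold threshold. split; intros [Ha H]; split; auto; lra.
Qed.

Lemma spce_exists : is_tolerance_cdf F -> exists alpha, spce dC dD F alpha.
Proof.
  intros HT.
  set (h := fun alpha => 1 - alpha - F (threshold alpha)).
  assert (Hh : continuity h).
  { assert (Hs : continuity threshold).
    { unfold threshold. reg. }
    unfold h. apply continuity_minus; [reg|].
    exact (continuity_comp threshold F Hs F_cont). }
  assert (Hsign : h 0 * h 1 <= 0).
  { pose proof (tolerance_cdf_bounds F HT (threshold 0)).
    pose proof (tolerance_cdf_bounds F HT (threshold 1)).
    assert (0 <= h 0) by (unfold h; lra).
    assert (h 1 <= 0) by (unfold h; lra).
    nra. }
  destruct (IVT_cor h 0 1 Hh ltac:(lra) Hsign) as [z [Hz Hhz]].
  exists z. apply spce_fixpointE. unfold h in Hhz; split; [assumption | lra].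
Qed.

Lemma spce_unique :
  (forall x y, x <= y -> F x <= F y) -> dD <= dC ->
  forall alpha beta, spce dC dD F alpha -> spce dC dD F beta -> alpha = beta.
Proof.
  intros Hmono HdCD.
  assert (Hlt : forall x y, spce dC dD F x -> spce dC dD F y -> ~ x < y).
  { intros x y [_ Hx]%spce_fixpointE [_ Hy]%spce_fixpointE Hxy.
    assert (F (threshold x) <= F (threshold y)) by (apply Hmono; unfold threshold; nra).
    lra. }
  intros alpha beta Ha Hb.
  destruct (Rtotal_order alpha beta) as [H|[H|H]]; [| exact H |].
  - exfalso; exact (Hlt _ _ Ha Hb H).
  - exfalso; exact (Hlt _ _ Hb Ha H).
Qed.

End Equilibria.

Theorem theorem4p1 (a b c d : R) (F : R -> R) :
  b < d -> d < a -> a < c ->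
  is_tolerance_cdf F -> continuity F ->
  (forall alpha, 0 <= alpha <= 1 ->
     (spce (c - a) (d - b) F alpha <->
      1 - alpha = F (alpha * (c - a) + (1 - alpha) * (d - b)))) /\
  (exists alpha, spce (c - a) (d - b) F alpha) /\
  (spce (c - a) (d - b) F 0 <-> F (d - b) = 1) /\
  (c - a > d - b -> exists! alpha, spce (c - a) (d - b) F alpha).
Proof.
  intros Hbd Hda Hac HT HF.
  pose proof (spce_fixpointE (c - a) (d - b) F HF) as Hfix.
  destruct (spce_exists (c - a) (d - b) F HF HT) as [alpha0 Halpha0].
  split; [| split; [| split]].
  - intros alpha Ha. rewrite Hfix. tauto.
  - now exists alpha0.
  - rewrite Hfix. replace (0 * (c - a) + (1 - 0) * (d - b)) with (d - b) by ring.
    split; [intros [_ H] | intros H; split]; lra.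
  - intros Hgt. exists alpha0. split; [assumption|].
    intros beta Hbeta.
    exact (spce_unique (c - a) (d - b) F HF (proj1 HT) ltac:(lra) _ _ Halpha0 Hbeta).
Qed.
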